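(* Let $k$ be a commutative ring, $H$ a Hopf algebra over $k$ with bijective antipode $S$ (inverse $\overline{S}$), and $A$ a right $H$-comodule algebra. Then there is an isomorphism of categories $\gamma:\ \mathcal{C}'_A\to\mathcal{C}_A$ which is the identity on objects and is given on morphisms by $\gamma(f')=f'\circ S$; in particular $f'\circ S\in\mathcal{C}_A(\mathbf{i},\mathbf{j})$ for every $f'\in\mathcal{C}'_A(\mathbf{i},\mathbf{j})$, $\gamma(g'\star f')=\gamma(g')*\gamma(f')$, and the inverse functor is $f\mapsto f\circ\overline{S}$.
   Context: Sweedler notation: $\Delta(h)=h_{(1)}\otimes h_{(2)}$, and for a right $H$-comodule, $\rho(a)=a_{[0]}\otimes a_{[1]}$. A right $H$-comodule algebra is an algebra $A$ with a right $H$-coaction $\rho$ that is an algebra map. Let $B=A^{\mathrm{co}H}=\{a\in A:\rho(a)=a\otimes 1\}$. The category $\mathcal{C}_A$ has two objects $\mathbf{1},\mathbf{2}$; writing $\mathcal{C}_A(\mathbf{i},\mathbf{j})$ for the morphisms from $\mathbf{i}$ to $\mathbf{j}$, all of them sets of $k$-linear maps $H\to A$: $\mathcal{C}_A(\mathbf{1},\mathbf{1})=\{v:\rho(v(h))=v(h)\otimes 1\}=\mathrm{Hom}(H,B)$; $\mathcal{C}_A(\mathbf{2},\mathbf{1})=\{t:\rho(t(h))=t(h_{(1)})\otimes h_{(2)}\}=\mathrm{Hom}^H(H,A)$; $\mathcal{C}_A(\mathbf{1},\mathbf{2})=\{u:\rho(u(h))=u(h_{(2)})\otimes S(h_{(1)})\}$;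 $\mathcal{C}_A(\mathbf{2},\mathbf{2})=\{w:\rho(w(h))=w(h_{(2)})\otimes S(h_{(1)})h_{(3)}\}$ (all conditions for all $h\in H$). Composition of $f:\mathbf{i}\to\mathbf{j}$ and $g:\mathbf{j}\to\mathbf{k}$ is the convolution $g*f$, $(g*f)(h)=g(h_{(1)})f(h_{(2)})$; identities are $h\mapsto\varepsilon(h)1_A$. The category $\mathcal{C}'_A$ has objects $\mathbf{1},\mathbf{2}$ and morphism sets of $k$-linear maps $H\to A$: $\mathcal{C}'_A(\mathbf{1},\mathbf{1})=\mathrm{Hom}(H,B)$; $\mathcal{C}'_A(\mathbf{1},\mathbf{2})=\{t':\rho(t'(h))=t'(h_{(1)})\otimes h_{(2)}\}=\mathrm{Hom}^H(H,A)$; $\mathcal{C}'_A(\mathbf{2},\mathbf{1})=\{u':\rho(u'(h))=u'(h_{(2)})\otimes \overline{S}(h_{(1)})\}$; $\mathcal{C}'_A(\mathbf{2},\mathbf{2})=\{w':\rho(w'(h))=w'(h_{(2)})\otimes h_{(3)}\overline{S}(h_{(1)})\}$; composition of $f':\mathbf{i}\to\mathbf{j}$ and $g':\mathbf{j}\to\mathbf{k}$ is $g'\star f'$, $(g'\star f')(h)=g'(h_{(2)})f'(h_{(1)})$. *)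

From HB Require Import structures.
From mathcomp Require Import all_boot all_order all_algebra.
Set Implicit Arguments. Unset Strict Implicit. Unset Printing Implicit Defensive.
Import GRing.Theory.
Local Open Scope ring_scope.

Section Defs.
Variable k : comNzRingType.

Definition klinear (X Y : lmodType k) (f : X -> Y) : Prop :=
  forall (a : k) (x y : X), f (a *: x + y) = a *: f x + f y.

Definition kbilinear (X Y M : lmodType k) (b : X -> Y -> M) : Prop :=
  (forall y, klinear (fun x => b x y)) /\ (forall x, klinear (b x)).

Definition ktrilinear (X Y Z M : lmodType k) (b : X -> Y -> Z -> M) : Prop :=
  (forall y z, klinear (fun x => b x y z)) /\ (forall x z, klinear (fun y => b x y z))
  /\ (forall x y, klinear (b x y)).

(* A finite formal sum [:: (x_1,y_1); ...] represents sum_i x_i (x) y_i in X (x)_k Y.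
   Two such sums are equal in X (x)_k Y iff they agree under every k-bilinear map
   (universal property of the tensor product). *)
Definition teq2 (X Y : lmodType k) (s t : seq (X * Y)) : Prop :=
  forall (M : lmodType k) (b : X -> Y -> M), kbilinear b ->
    \sum_(p <- s) b p.1 p.2 = \sum_(p <- t) b p.1 p.2.

Definition teq3 (X Y Z : lmodType k) (s t : seq (X * Y * Z)) : Prop :=
  forall (M : lmodType k) (b : X -> Y -> Z -> M), ktrilinear b ->
    \sum_(p <- s) b p.1.1 p.1.2 p.2 = \sum_(p <- t) b p.1.1 p.1.2 p.2.

Variable H : algType k.
(* D h is a chosen representative of Delta(h) = h_(1) (x) h_(2) *)
Variable D : H -> seq (H * H).
Variable eps : H -> k.
Variable S : H -> H.

Definition D3 (h : H) : seq (H * H * H) :=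
  flatten [seq [seq (q.1, q.2, p.2) | q <- D p.1] | p <- D h].

Definition is_hopf : Prop :=
  [/\
      (forall (a : k) (g h : H),
         teq2 (D (a *: g + h)) ([seq (a *: p.1, p.2) | p <- D g] ++ D h)),
      (forall h, teq3 (D3 h)
         (flatten [seq [seq (p.1, q.1, q.2) | q <- D p.2] | p <- D h])),
      (forall h, (\sum_(p <- D h) eps p.1 *: p.2 = h) /\ (\sum_(p <- D h) eps p.2 *: p.1 = h)),
      ((forall g h, teq2 (D (g * h)) [seq (p.1 * q.1, p.2 * q.2) | p <- D g, q <- D h])
        /\ teq2 (D 1) [:: (1, 1)]) &
      (
      (klinear (eps : H -> k^o) /\ (forall g h, eps (g * h) = eps g * eps h) /\ eps 1 = 1) /\
      (klinear S /\
      (forall h, (\sum_(p <- D h) S p.1 * p.2 = eps h *: 1)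
              /\ (\sum_(p <- D h) p.1 * S p.2 = eps h *: 1))))].

Variable A : algType k.
Variable rho : A -> seq (A * H).

Definition is_comodule_algebra : Prop :=
  [/\ (forall (a : k) (x y : A),
         teq2 (rho (a *: x + y)) ([seq (a *: p.1, p.2) | p <- rho x] ++ rho y)),
      (forall x, teq3
         (flatten [seq [seq (q.1, q.2, p.2) | q <- rho p.1] | p <- rho x])
         (flatten [seq [seq (p.1, q.1, q.2) | q <- D p.2] | p <- rho x])),
      (forall x, \sum_(p <- rho x) eps p.2 *: p.1 = x),
      (forall x y, teq2 (rho (x * y)) [seq (p.1 * q.1, p.2 * q.2) | p <- rho x, q <- rho y]) &
      teq2 (rho 1) [:: (1, 1)]].

Inductive obj := O1 | O2.

Definition conv (g f : H -> A) (h : H) : A := \sum_(p <- D h) g p.1 * f p.2.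
Definition star (g f : H -> A) (h : H) : A := \sum_(p <- D h) g p.2 * f p.1.
Definition idmor (h : H) : A := eps h *: 1.

Definition Chom (i j : obj) (f : H -> A) : Prop :=
  klinear f /\
  match i, j with
  | O1, O1 => forall h, teq2 (rho (f h)) [:: (f h, 1)]
  | O2, O1 => forall h, teq2 (rho (f h)) [seq (f p.1, p.2) | p <- D h]
  | O1, O2 => forall h, teq2 (rho (f h)) [seq (f p.2, S p.1) | p <- D h]
  | O2, O2 => forall h, teq2 (rho (f h)) [seq (f q.1.2, S q.1.1 * q.2) | q <- D3 h]
  end.

Variable Sb : H -> H.

Definition C'hom (i j : obj) (f : H -> A) : Prop :=
  klinear f /\
  match i, j with
  | O1, O1 => forall h, teq2 (rho (f h)) [:: (f h, 1)]
  | O1, O2 => forall h, teq2 (rho (f h)) [seq (f p.1, p.2) | p <- D h]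
  | O2, O1 => forall h, teq2 (rho (f h)) [seq (f p.2, Sb p.1) | p <- D h]
  | O2, O2 => forall h, teq2 (rho (f h)) [seq (f q.1.2, q.2 * Sb q.1.1) | q <- D3 h]
  end.

End Defs.

From HB Require Import structures.
From mathcomp Require Import all_boot all_order all_algebra.
Import GRing.Theory.
Local Open Scope ring_scope.

(* The antipode is an anti-coalgebra map: Delta (S h) = S h_(2) (x) S h_(1) and
   eps (S h) = eps h.  Indeed Delta o S and tau (S (x) S) Delta are both convolution
   inverses of Delta in Hom(H, H (x) H), so they agree by coassociativity.  Substituting
   S h for h in the coaction condition of a morphism of C'_A, anti-comultiplicativity
   reverses the Sweedler indices and cancels Sb against S, which yields exactly the
   condition of C_A; the same computation turns star into convolution.  The inverse
   functor works the same way, since Sb is anti-comultiplicative as well. *)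

Set Implicit Arguments. Unset Strict Implicit. Unset Printing Implicit Defensive.

Section KLinear.
Variable k : comNzRingType.
Implicit Types X Y Z M : lmodType k.

Lemma klinear0 X Y (f : X -> Y) : klinear f -> f 0 = 0.
Proof.
move=> Hf; have := Hf 1 0 0; rewrite !scale1r addr0 => e.
by apply: (@addrI _ (f 0)); rewrite addr0 -e.
Qed.

Lemma klinearD X Y (f : X -> Y) : klinear f -> forall x y, f (x + y) = f x + f y.
Proof. by move=> Hf x y; have := Hf 1 x y; rewrite !scale1r. Qed.

Lemma klinearZ X Y (f : X -> Y) : klinear f -> forall a x, f (a *: x) = a *: f x.
Proof. by move=> Hf a x; have := Hf a x 0; rewrite !addr0 (klinear0 Hf) addr0. Qed.

Lemma klinear_sum X Y (f : X -> Y) : klinear f ->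
  forall I (s : seq I) (F : I -> X), f (\sum_(i <- s) F i) = \sum_(i <- s) f (F i).
Proof.
move=> Hf I s F; elim: s => [|i s IH]; first by rewrite !big_nil (klinear0 Hf).
by rewrite !big_cons (klinearD Hf) IH.
Qed.

Lemma klinear_can X Y (f : X -> Y) (g : Y -> X) :
  klinear f -> cancel f g -> cancel g f -> klinear g.
Proof. by move=> Hf fK gK a x y; apply: (can_inj fK); rewrite Hf !gK. Qed.

Lemma klinear_id X : klinear (@id X).
Proof. by []. Qed.

Lemma klinear_comp X Y Z (f : Y -> Z) (g : X -> Y) :
  klinear f -> klinear g -> klinear (fun x => f (g x)).
Proof. by move=> Hf Hg a x y; rewrite Hg Hf. Qed.

Lemma klinear_sumr X Y I (s : seq I) (F : I -> X -> Y) :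
  (forall i, klinear (F i)) -> klinear (fun x => \sum_(i <- s) F i x).
Proof.
by move=> HF a x y; rewrite scaler_sumr -big_split; apply: eq_bigr => i _; rewrite HF.
Qed.

Lemma klinear_mull (R : algType k) (y : R) : klinear (fun x : R => x * y).
Proof. by move=> a x z; rewrite mulrDl scalerAl. Qed.

Lemma klinear_mulr (R : algType k) (x : R) : klinear (fun y : R => x * y).
Proof. by move=> a y z; rewrite mulrDr scalerAr. Qed.

Lemma kbilinear_mul (R : algType k) : kbilinear (fun x y : R => x * y).
Proof. by split=> ?; [apply: klinear_mull | apply: klinear_mulr]. Qed.

Lemma kbilinear_comp X Y X' Y' M (b : X' -> Y' -> M) (f : X -> X') (g : Y -> Y') :
  kbilinear b -> klinear f -> klinear g -> kbilinear (fun x y => b (f x) (g y)).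
Proof.
move=> Hb Hf Hg; split=> z.
  exact: klinear_comp (Hb.1 (g z)) Hf.
exact: klinear_comp (Hb.2 (f z)) Hg.
Qed.

Lemma kbilinear_flip X Y M (b : X -> Y -> M) : kbilinear b -> kbilinear (fun y x => b x y).
Proof. by case. Qed.

Lemma kbilinear_sum X Y M I (s : seq I) (B : I -> X -> Y -> M) :
  (forall i, kbilinear (B i)) -> kbilinear (fun x y => \sum_(i <- s) B i x y).
Proof. by move=> HB; split=> z; apply: klinear_sumr => i; [apply: (HB i).1 | apply: (HB i).2]. Qed.

End KLinear.

Section Hopf.
Variable k : comNzRingType.
Variable H : algType k.
Variable D : H -> seq (H * H).
Variable eps : H -> k.
Variable S : H -> H.
Hypothesis hopf : is_hopf D eps S.
Implicit Types X : lmodType k.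

Lemma coproduct_klinear X (G : H -> H -> X) : kbilinear G ->
  klinear (fun h => \sum_(p <- D h) G p.1 p.2).
Proof.
case: hopf => DZ _ _ _ _ HG a x y.
rewrite (DZ a x y X G HG) big_cat big_map /= scaler_sumr; congr (_ + _).
by apply: eq_bigr => p _; rewrite (klinearZ (HG.1 _)).
Qed.

Lemma coassoc X (t : H -> H -> H -> X) : ktrilinear t -> forall h,
  \sum_(p <- D h) \sum_(q <- D p.1) t q.1 q.2 p.2 =
  \sum_(p <- D h) \sum_(q <- D p.2) t p.1 q.1 q.2.
Proof.
case: hopf => _ DD _ _ _ Ht h; have := DD h X t Ht.
rewrite /D3 !big_flatten /= !big_map => e.
transitivity (\sum_(p <- D h) \sum_(q <- [seq (q.1, q.2, p.2) | q <- D p.1])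
                 t q.1.1 q.1.2 q.2).
  by apply: eq_bigr => p _; rewrite big_map.
by rewrite e; apply: eq_bigr => p _; rewrite big_map.
Qed.

Lemma counitr X (f : H -> X) : klinear f -> forall h,
  \sum_(p <- D h) eps p.2 *: f p.1 = f h.
Proof.
case: hopf => _ _ /(_ _) counit _ _ Hf h; case: (counit h) => _ e; rewrite -{2}e.
by rewrite (klinear_sum Hf); apply: eq_bigr => p _; rewrite (klinearZ Hf).
Qed.

Lemma counitl X (f : H -> X) : klinear f -> forall h,
  \sum_(p <- D h) eps p.1 *: f p.2 = f h.
Proof.
case: hopf => _ _ /(_ _) counit _ _ Hf h; case: (counit h) => e _; rewrite -{2}e.
by rewrite (klinear_sum Hf); apply: eq_bigr => p _; rewrite (klinearZ Hf).
Qed.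

Lemma coproductM X (G : H -> H -> X) : kbilinear G -> forall g h,
  \sum_(p <- D (g * h)) G p.1 p.2 =
  \sum_(p <- D g) \sum_(q <- D h) G (p.1 * q.1) (p.2 * q.2).
Proof. by case: hopf => _ _ _ [DM _] _ HG g h; rewrite (DM g h X G HG) big_allpairs_dep. Qed.

Lemma coproduct1 X (G : H -> H -> X) : kbilinear G -> \sum_(p <- D 1) G p.1 p.2 = G 1 1.
Proof. by case: hopf => _ _ _ [_ D1] _ HG; rewrite (D1 X G HG) big_seq1. Qed.

Lemma antipode_klinear : klinear S.
Proof. by case: hopf => _ _ _ _ [_ []]. Qed.

Lemma antipode_convl h : \sum_(p <- D h) S p.1 * p.2 = eps h *: 1.
Proof. by case: hopf => _ _ _ _ [_ [_ /(_ h) []]]. Qed.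

Lemma antipode_convr h : \sum_(p <- D h) p.1 * S p.2 = eps h *: 1.
Proof. by case: hopf => _ _ _ _ [_ [_ /(_ h) []]]. Qed.

Lemma counit_antipode h : eps (S h) = eps h.
Proof.
case: hopf => _ _ _ _ [[epsZ [epsM eps1]] _].
have epsS : klinear (fun y => (eps (S y) : k^o)) := klinear_comp epsZ antipode_klinear.
have := congr1 eps (antipode_convl h).
rewrite (klinear_sum epsZ) (klinearZ epsZ) /= eps1 => e.
rewrite -(counitr epsS h) -[RHS]mulr1 -[RHS]e.
by apply: eq_bigr => p _; rewrite epsM mulrC.
Qed.

Lemma klinear_mulr_antipode (u : H) : klinear (fun y => u * S y).
Proof. exact: klinear_comp (klinear_mulr u) antipode_klinear. Qed.

Lemma coproduct_antipode_conv X (b : H -> H -> X) : kbilinear b -> forall x,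
  \sum_(q <- D x) \sum_(r <- D (S q.1)) \sum_(s <- D q.2) b (r.1 * s.1) (r.2 * s.2)
  = eps x *: b 1 1.
Proof.
move=> Hb x; have DbZ := coproduct_klinear Hb.
transitivity (\sum_(q <- D x) \sum_(p <- D (S q.1 * q.2)) b p.1 p.2).
  by apply: eq_bigr => q _; rewrite coproductM.
by rewrite -(klinear_sum DbZ _ (fun q => S q.1 * q.2)) antipode_convl (klinearZ DbZ) coproduct1.
Qed.

Lemma coproduct_conv_antipode_flip X (b : H -> H -> X) : kbilinear b -> forall x,
  \sum_(q <- D x) \sum_(r <- D q.1) \sum_(s <- D q.2) b (r.1 * S s.2) (r.2 * S s.1)
  = eps x *: b 1 1.
Proof.
move=> Hb x.
have Ht : ktrilinear (fun u v w => \sum_(s <- D w) b (u * S s.2) (v * S s.1)).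
  split; [|split] => [v w | u w | u v].
  - by apply: klinear_sumr => s; apply: klinear_comp (Hb.1 _) (klinear_mull _).
  - by apply: klinear_sumr => s; apply: klinear_comp (Hb.2 _) (klinear_mull _).
  - apply: (coproduct_klinear (G := fun s1 s2 => b (u * S s2) (v * S s1))).
    exact: kbilinear_flip (kbilinear_comp Hb (klinear_mulr_antipode u) (klinear_mulr_antipode v)).
rewrite (coassoc Ht x).
transitivity (\sum_(q <- D x) b (q.1 * S q.2) 1).
  apply: eq_bigr => q _.
  have Ht' : ktrilinear (fun v w1 w2 => b (q.1 * S w2) (v * S w1)).
    split; [|split] => [w1 w2 | v w2 | v w1].
    - exact: klinear_comp (Hb.2 _) (klinear_mull _).
    - exact: klinear_comp (Hb.2 _) (klinear_mulr_antipode _).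
    - exact: klinear_comp (Hb.1 _) (klinear_mulr_antipode _).
  rewrite -(coassoc Ht' q.2) -(counitl (klinear_comp (Hb.1 1) (klinear_mulr_antipode q.1))).
  apply: eq_bigr => r _ /=.
  by rewrite -(klinear_sum (Hb.2 _) _ (fun s => s.1 * S s.2)) antipode_convr (klinearZ (Hb.2 _)).
by rewrite -(klinear_sum (Hb.1 1) _ (fun q => q.1 * S q.2)) antipode_convr (klinearZ (Hb.1 _)).
Qed.

Definition anticomultiplicative (T : H -> H) : Prop :=
  forall h, teq2 (D (T h)) [seq (T p.2, T p.1) | p <- D h].

Lemma antipode_anticomultiplicative : anticomultiplicative S.
Proof.
move=> h X b Hb; rewrite big_map /=.
have bmull c d : kbilinear (fun u v => b (u * c) (v * d)).
  exact: kbilinear_comp Hb (klinear_mull c) (klinear_mull d).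
have bmulr c d : kbilinear (fun u v => b (c * u) (d * v)).
  exact: kbilinear_comp Hb (klinear_mulr c) (klinear_mulr d).
(* V p q r stands for (Delta S)(p) Delta(q) (tau (S (x) S) Delta)(r); the two sides are
   its two bracketings, collapsed by the inverse laws above, and coassociativity equates them. *)
pose V x y z := \sum_(r <- D y) \sum_(s <- D z) \sum_(t <- D (S x))
  b (t.1 * (r.1 * S s.2)) (t.2 * (r.2 * S s.1)).
have HV : ktrilinear V.
  split; [|split] => [y z | x z | x y].
  - do 2!apply: klinear_sumr => ?.
    exact: klinear_comp (coproduct_klinear (bmull _ _)) antipode_klinear.
  - apply: (coproduct_klinear (G := fun r1 r2 => \sum_(s <- D z) \sum_(t <- D (S x))
      b (t.1 * (r1 * S s.2)) (t.2 * (r2 * S s.1)))).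
    do 2!apply: kbilinear_sum => ?.
    exact: kbilinear_comp Hb (klinear_comp (klinear_mulr _) (klinear_mull _))
                             (klinear_comp (klinear_mulr _) (klinear_mull _)).
  - apply: klinear_sumr => r.
    apply: (coproduct_klinear (G := fun s1 s2 => \sum_(t <- D (S x))
      b (t.1 * (r.1 * S s2)) (t.2 * (r.2 * S s1)))).
    apply: kbilinear_sum => t; apply: kbilinear_flip.
    exact: kbilinear_comp Hb (klinear_comp (klinear_mulr _) (klinear_mulr_antipode _))
                             (klinear_comp (klinear_mulr _) (klinear_mulr_antipode _)).
have -> : \sum_(p <- D (S h)) b p.1 p.2 =
          \sum_(p <- D h) \sum_(q <- D p.2) V p.1 q.1 q.2.
  rewrite -(counitr (klinear_comp (coproduct_klinear Hb) antipode_klinear) h).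
  apply: eq_bigr => p _.
  have bS := kbilinear_sum (D (S p.1)) (fun t => bmulr t.1 t.2).
  have -> : \sum_(t <- D (S p.1)) b t.1 t.2 = \sum_(t <- D (S p.1)) b (t.1 * 1) (t.2 * 1).
    by apply: eq_bigr => t _; rewrite !mulr1.
  by rewrite -(coproduct_conv_antipode_flip bS).
have -> : \sum_(p <- D h) b (S p.2) (S p.1) =
          \sum_(p <- D h) \sum_(q <- D p.1) V q.1 q.2 p.2.
  have bSS := kbilinear_flip (kbilinear_comp Hb antipode_klinear antipode_klinear).
  rewrite -(counitl (coproduct_klinear bSS) h).
  apply: eq_bigr => p _.
  have bS := kbilinear_sum (D p.2) (fun s => bmull (S s.2) (S s.1)).
  have -> : \sum_(s <- D p.2) b (S s.2) (S s.1) = \sum_(s <- D p.2) b (1 * S s.2) (1 * S s.1).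
    by apply: eq_bigr => s _; rewrite !mul1r.
  rewrite -(coproduct_antipode_conv bS); apply: eq_bigr => q _.
  rewrite [LHS]exchange_big; apply: eq_bigr => r _.
  rewrite [LHS]exchange_big; apply: eq_bigr => s _.
  by apply: eq_bigr => t _; rewrite !mulrA.
by rewrite (coassoc HV).
Qed.

Lemma anticomultiplicative_can (T Tb : H -> H) : klinear T -> cancel T Tb -> cancel Tb T ->
  anticomultiplicative T -> anticomultiplicative Tb.
Proof.
move=> TZ TK TbK DT h X b Hb; rewrite big_map.
have Hb' := kbilinear_flip (kbilinear_comp Hb (klinear_can TZ TK TbK) (klinear_can TZ TK TbK)).
have := DT (Tb h) X _ Hb'; rewrite TbK !big_map /= => ->.
by apply: eq_bigr => p _; rewrite !TK.
Qed.

Lemma D3_anticomultiplicative (T : H -> H) : klinear T -> anticomultiplicative T ->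
  forall h, teq3 (D3 D (T h)) [seq (T q.2, T q.1.2, T q.1.1) | q <- D3 D h].
Proof.
move=> TZ DT h M t [tZ1 [tZ2 tZ3]].
rewrite /D3 big_map !big_flatten !big_map /=.
under eq_bigr do rewrite big_map /=.
under [RHS]eq_bigr do rewrite big_map /=.
pose F u v := \sum_(q <- D u) t q.1 q.2 v.
have HF : kbilinear F.
  split=> w; last by apply: klinear_sumr => q; apply: tZ3.
  by apply: (coproduct_klinear (G := fun q1 q2 => t q1 q2 w)); split=> y; [apply: tZ1 | apply: tZ2].
rewrite -[LHS]/(\sum_(p <- D (T h)) F p.1 p.2) (DT h M F HF) big_map /F /=.
transitivity (\sum_(p <- D h) \sum_(q <- D p.2) t (T q.2) (T q.1) (T p.1)).
  apply: eq_bigr => p _.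
  have Ht : kbilinear (fun u v => t u v (T p.1)) by split=> y; [apply: tZ1 | apply: tZ2].
  by rewrite (DT p.2 M _ Ht) big_map.
have Ht' : ktrilinear (fun x y z => t (T z) (T y) (T x)).
  split; [|split] => ? ?.
  - exact: klinear_comp (tZ3 _ _) TZ.
  - exact: klinear_comp (tZ2 _ _) TZ.
  - exact: klinear_comp (tZ1 _ _) TZ.
by rewrite -(coassoc Ht' h).
Qed.

End Hopf.

Section Precomposition.
Variables (k : comNzRingType) (H : algType k) (D : H -> seq (H * H)) (eps : H -> k).
Variables (S Sb : H -> H).
Hypotheses (hopf : is_hopf D eps S) (SK : cancel S Sb) (SbK : cancel Sb S).
Variables (A : algType k) (rho : A -> seq (A * H)).

Let SZ := antipode_klinear hopf.
Let SbZ := klinear_can SZ SK SbK.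
Let DS := antipode_anticomultiplicative hopf.
Let DSb := anticomultiplicative_can SZ SK SbK DS.

Lemma C'hom_comp_antipode i j (f : H -> A) : C'hom D rho Sb i j f -> Chom D S rho i j (f \o S).
Proof.
case=> fZ Hf; split; first exact: klinear_comp fZ SZ.
case: i j Hf => [] [] Hf h M b Hb /=; rewrite (Hf (S h) M b Hb) ?big_map //=.
- by rewrite (DS h (kbilinear_comp Hb fZ (@klinear_id _ _))) big_map.
- have Hb' := kbilinear_flip (kbilinear_comp Hb fZ SbZ).
  by rewrite (DS h Hb') big_map; apply: eq_bigr => p _ /=; rewrite SK.
- have Ht : ktrilinear (fun u v w => b (f v) (w * Sb u)).
    split; [|split] => ? ?.
    + exact: klinear_comp (Hb.2 _) (klinear_comp (klinear_mulr _) SbZ).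
    + exact: klinear_comp (Hb.1 _) fZ.
    + exact: klinear_comp (Hb.2 _) (klinear_mull _).
  by rewrite (D3_anticomultiplicative hopf SZ DS h Ht) big_map;
    apply: eq_bigr => q _ /=; rewrite SK.
Qed.

Lemma Chom_comp_antipode_inv i j (f : H -> A) : Chom D S rho i j f -> C'hom D rho Sb i j (f \o Sb).
Proof.
case=> fZ Hf; split; first exact: klinear_comp fZ SbZ.
case: i j Hf => [] [] Hf h M b Hb /=; rewrite (Hf (Sb h) M b Hb) ?big_map //=.
- have Hb' := kbilinear_flip (kbilinear_comp Hb fZ SZ).
  by rewrite (DSb h Hb') big_map; apply: eq_bigr => p _ /=; rewrite SbK.
- by rewrite (DSb h (kbilinear_comp Hb fZ (@klinear_id _ _))) big_map.
- have Ht : ktrilinear (fun u v w => b (f v) (S u * w)).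
    split; [|split] => ? ?.
    + exact: klinear_comp (Hb.2 _) (klinear_comp (klinear_mull _) SZ).
    + exact: klinear_comp (Hb.1 _) fZ.
    + exact: klinear_comp (Hb.2 _) (klinear_mulr _).
  by rewrite (D3_anticomultiplicative hopf SbZ DSb h Ht) big_map;
    apply: eq_bigr => q _ /=; rewrite SbK.
Qed.

Lemma star_comp_antipode (f g : H -> A) : klinear f -> klinear g ->
  forall h, star D g f (S h) = conv D (g \o S) (f \o S) h.
Proof.
move=> fZ gZ h; rewrite /star /conv.
have Hb := kbilinear_flip (kbilinear_comp (@kbilinear_mul _ A) gZ fZ).
by rewrite (DS h Hb) big_map.
Qed.

Lemma idmor_comp_antipode h : idmor eps A (S h) = idmor eps A h.
Proof. by rewrite /idmor (counit_antipode hopf). Qed.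

End Precomposition.

Unset Implicit Arguments. Set Strict Implicit.

Theorem proposition2p1 (k : comNzRingType) (H : algType k)
  (D : H -> seq (H * H)) (eps : H -> k) (S Sb : H -> H)
  (hopfH : is_hopf D eps S) (SK : cancel S Sb) (SbK : cancel Sb S)
  (A : algType k) (rho : A -> seq (A * H))
  (comodA : is_comodule_algebra D eps rho) :
  (forall (i j : obj) (f' : H -> A), C'hom D rho Sb i j f' -> Chom D S rho i j (f' \o S)) /\
  (forall (i j l : obj) (f' g' : H -> A),
     C'hom D rho Sb i j f' -> C'hom D rho Sb j l g' ->
     forall h, (star D g' f' \o S) h = conv D (g' \o S) (f' \o S) h) /\
  (forall h, (idmor eps A \o S) h = idmor eps A h) /\
  (forall (i j : obj) (f : H -> A), Chom D S rho i j f -> C'hom D rho Sb i j (f \o Sb)) /\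
  (forall (i j : obj) (f : H -> A), Chom D S rho i j f -> forall h, ((f \o Sb) \o S) h = f h) /\
  (forall (i j : obj) (f' : H -> A), C'hom D rho Sb i j f' -> forall h, ((f' \o S) \o Sb) h = f' h).
Proof.
split; first by move=> i j f'; exact: (C'hom_comp_antipode hopfH SK SbK).
split; first by move=> i j l f' g' [fZ _] [gZ _] h; exact: (star_comp_antipode hopfH fZ gZ h).
split; first by move=> h; exact: (idmor_comp_antipode hopfH A h).
split; first by move=> i j f; exact: (Chom_comp_antipode_inv hopfH SK SbK).
by split=> i j f _ h /=; rewrite ?SK ?SbK.
Qed.
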